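(* Let $L>0$ and $\sigma>0$, and let $X_1,\dots,X_n$ be i.i.d. real random variables from a symmetric distribution with $\mathbb{P}(|X_i|>\sigma)=1/2$ (e.g. uniform on $(-2\sigma,2\sigma)$). Then there is a symmetric function $K:\mathbb{R}\times\mathbb{R}\to\mathbb{R}$ satisfying $|K(x_1,x_2)-K(y_1,y_2)|\le L(|x_1-y_1|+|x_2-y_2|)$ for all $x_1,x_2,y_1,y_2$ such that, when $n\ge 8$, the kernel matrix $K=(K(X_i,X_j))_{i,j=1}^n$ satisfies $$\mathbb{P}\big(\|K-\mathbb{E}K\|>L\sigma n/8\big)\ge 1-e^{-n/8}.$$
   Context: $\|\cdot\|$ denotes the spectral norm of an $n\times n$ matrix. *)

From HB Require Import structures.
From mathcomp Require Import all_boot all_order all_algebra.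
From mathcomp Require Import all_classical all_reals all_analysis.
Set Implicit Arguments. Unset Strict Implicit. Unset Printing Implicit Defensive.
Import Order.TTheory GRing.Theory Num.Theory.
Local Open Scope classical_set_scope.
Local Open Scope ring_scope.

Definition l2norm (R : realType) (n : nat) (v : 'cV[R]_n) : R :=
  Num.sqrt (\sum_(i < n) v i ord0 ^+ 2).

Definition specnorm (R : realType) (n : nat) (M : 'M[R]_n) : R :=
  sup [set l2norm (M *m v) | v in [set v : 'cV[R]_n | l2norm v <= 1]].

Definition mutually_independent (R : realType) (d : measure_display)
  (T : measurableType d) (P : probability T R) (n : nat)
  (X : 'I_n -> T -> R) : Prop :=
  forall B : 'I_n -> set R, (forall i, measurable (B i)) ->
    P (\bigcap_(i in [set: 'I_n]) (X i @^-1` B i)) =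
    (\prod_(i < n) P (X i @^-1` B i))%E.

Definition identically_distributed (R : realType) (d : measure_display)
  (T : measurableType d) (P : probability T R) (n : nat)
  (X : 'I_n -> T -> R) : Prop :=
  forall i j (B : set R), measurable B -> P (X i @^-1` B) = P (X j @^-1` B).

Definition symmetric_distribution (R : realType) (d : measure_display)
  (T : measurableType d) (P : probability T R) (Y : T -> R) : Prop :=
  forall B : set R, measurable B ->
    P (Y @^-1` B) = P ((fun w => - Y w) @^-1` B).

Definition expected_kernel_matrix (R : realType) (d : measure_display)
  (T : measurableType d) (P : probability T R) (n : nat)
  (X : 'I_n -> T -> R) (K : R -> R -> R) : 'M[R]_n :=
  \matrix_(i, j) fine (\int[P]_w (K (X i w) (X j w))%:E).

Definition kernel_matrix (R : realType) (T : Type) (n : nat)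
  (X : 'I_n -> T -> R) (K : R -> R -> R) (w : T) : 'M[R]_n :=
  \matrix_(i, j) K (X i w) (X j w).

From HB Require Import structures.
From mathcomp Require Import all_boot all_order all_algebra.
From mathcomp Require Import all_classical all_reals all_analysis.
From mathcomp Require Import ring lra zify measurable_realfun.
Import Order.TTheory GRing.Theory Num.Theory.
Set Implicit Arguments. Unset Strict Implicit. Unset Printing Implicit Defensive.
Local Open Scope classical_set_scope.
Local Open Scope ring_scope.

(* Clip the samples to [-sigma, sigma] and take K(x, y) = L (clip x + clip y).
   Clipping is 1-Lipschitz and odd, so K is L-Lipschitz and, the X_i being
   symmetric, E K = 0.  The kernel matrix is then a 1^T + 1 a^T with
   a_i = L clip(X_i); testing it on the normalised all-ones vector gives
   ||K||^2 >= n |a|^2 >= n L^2 sigma^2 N, where N is the number of i with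
   |X_i| > sigma.  N is Binomial(n, 1/2), and a Chernoff bound shows that
   N <= n/64 has probability at most e^{-n/8}; otherwise ||K|| > L sigma n/8. *)

Section clip.
Variable R : realType.

(* For 0 <= s, the clipping of x to [-s, s]. *)
Definition clip (s x : R) : R := (`|x + s| - `|x - s|) / 2.

Lemma clip_lipschitz s x y : `|clip s x - clip s y| <= `|x - y|.
Proof.
have := ler_dist_dist (x + s) (y + s); have := ler_dist_dist (x - s) (y - s).
rewrite (_ : x - s - (y - s) = x - y) 1?(_ : x + s - (y + s) = x - y); try ring.
rewrite /clip !ler_norml => /andP[? ?] /andP[? ?]; apply/andP; split; lra.
Qed.

Lemma norm_clip_le s x : 0 <= s -> `|clip s x| <= s.
Proof.
move=> s_ge0; have := ler_dist_dist (x + s) (x - s).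
rewrite (_ : x + s - (x - s) = s *+ 2); last by rewrite mulr2n; ring.
rewrite normrMn (ger0_norm s_ge0) /clip !ler_norml => /andP[? ?]; apply/andP; split; lra.
Qed.

Lemma clip_sqr s x : 0 <= s -> s < `|x| -> clip s x ^+ 2 = s ^+ 2.
Proof.
rewrite /clip; case: (lerP 0 x) => [x_ge0|x_lt0] s_ge0.
  rewrite (ger0_norm x_ge0) => sx.
  by rewrite (ger0_norm (x := x + s)) ?(ger0_norm (x := x - s)); lra.
rewrite (ltr0_norm x_lt0) => sx.
by rewrite (ler0_norm (x := x + s)) ?(ler0_norm (x := x - s)); lra.
Qed.

Lemma clipN s x : clip s (- x) = - clip s x.
Proof. by rewrite /clip -(normrN (- x + s)) -(normrN (- x - s)) !opprD !opprK; lra. Qed.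

Lemma measurable_clip s : measurable_fun setT (clip s).
Proof.
apply: measurable_funM => //; apply: measurable_funB;
  by apply: measurableT_comp => //; apply: measurable_funD.
Qed.

End clip.

Section symmetric_expectation.
Context (R : realType) d (T : measurableType d) (P : probability T R).

Lemma bounded_integrable (f : T -> R) (M : R) :
  measurable_fun setT f -> (forall w, `|f w| <= M) ->
  P.-integrable setT (EFin \o f).
Proof.
move=> mf fM; apply: measurable_bounded_integrable => //.
  exact: (le_lt_trans (probability_le1 P measurableT) (ltry 1)).
exists M; split; first exact: num_real.
by move=> x Mx w _; apply: le_trans (fM w) (ltW Mx).
Qed.

Lemma expectation_odd_symmetric (Y : T -> R) (g : R -> R) (M : R) :
  measurable_fun setT Y -> symmetric_distribution P Y ->
  measurable_fun setT g -> (forall x, g (- x) = - g x) ->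
  (forall x, `|g x| <= M) ->
  (\int[P]_w (g (Y w))%:E = 0)%E.
Proof.
move=> mY symY mg g_odd gM.
have mNY : measurable_fun setT (fun w => - Y w) by exact: measurableT_comp.
have mEg : measurable_fun setT (EFin \o g) by exact/measurable_EFinP.
have intg (Z : T -> R) : measurable_fun setT Z ->
    P.-integrable setT ((EFin \o g) \o Z).
  by move=> mZ; apply: (@bounded_integrable _ M) => //; exact: measurableT_comp.
have transfer (Z : T -> R) (mZ : measurable_fun setT Z) :
    (\int[P]_w (g (Z w))%:E = \int[pushforward P Z]_y (g y)%:E)%E.
  by rewrite (integral_pushforward mZ mEg) ?preimage_setT //; exact: intg.
have : (\int[P]_w (g (Y w))%:E = \int[P]_w (g (- Y w))%:E)%E.
  rewrite (transfer _ mY) (transfer _ mNY).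
  by apply: eq_measure_integral => A mA _; exact: symY.
under [X in _ = X]eq_integral do rewrite g_odd EFinN.
rewrite integralN; last exact/fin_num_adde_defr/integrable_pos_fin_num/intg.
move: (integrable_fin_num measurableT (intg _ mY)) => /=.
by case: (\int[P]_w _)%E => // r _ [r_eq]; congr EFin; lra.
Qed.

End symmetric_expectation.

Section clip_kernel.
Variable R : realType.

Definition clip_kernel (L s x y : R) : R := L * clip s x + L * clip s y.

Lemma clip_kernel_lipschitz (L s x1 x2 y1 y2 : R) : 0 <= L ->
  `|clip_kernel L s x1 x2 - clip_kernel L s y1 y2| <= L * (`|x1 - y1| + `|x2 - y2|).
Proof.
move=> L_ge0; rewrite /clip_kernel.
rewrite (_ : _ - _ = L * (clip s x1 - clip s y1) + L * (clip s x2 - clip s y2));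
  last by ring.
apply: le_trans (ler_normD _ _) _.
rewrite !normrM (ger0_norm L_ge0) -mulrDr ler_wpM2l //.
by apply: lerD; exact: clip_lipschitz.
Qed.

Lemma norm_scaled_clip_le (L s x : R) : 0 <= s -> `|L * clip s x| <= `|L| * s.
Proof. by move=> s_ge0; rewrite normrM ler_wpM2l // norm_clip_le. Qed.

Context d (T : measurableType d) (P : probability T R).

Lemma clip_kernel_integrable (L s : R) (Y Z : T -> R) : 0 <= s ->
  measurable_fun setT Y -> measurable_fun setT Z ->
  P.-integrable setT (fun w => (clip_kernel L s (Y w) (Z w))%:E).
Proof.
move=> s_ge0 mY mZ.
apply: (@bounded_integrable _ _ _ _ _ (`|L| * s + `|L| * s)) => [|w].
  apply: measurable_funD; apply: measurable_funM => //;
    by apply: measurableT_comp => //; exact: measurable_clip.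
by apply: le_trans (ler_normD _ _) _; apply: lerD; exact: norm_scaled_clip_le.
Qed.

Lemma expected_clip_kernel_matrix (L s : R) n (X : 'I_n -> T -> R) : 0 <= s ->
  (forall i, measurable_fun setT (X i)) ->
  (forall i, symmetric_distribution P (X i)) ->
  expected_kernel_matrix P X (clip_kernel L s) = 0.
Proof.
move=> s_ge0 mX symX.
have mLclip : measurable_fun setT (fun x => L * clip s x).
  by apply: measurable_funM => //; exact: measurable_clip.
have int0 i : (\int[P]_w (L * clip s (X i w))%:E = 0)%E.
  apply: (@expectation_odd_symmetric _ _ _ P _ (fun x => L * clip s x) (`|L| * s)) => //.
  - by move=> x; rewrite clipN mulrN.
  - by move=> x; exact: norm_scaled_clip_le.
have intL i : P.-integrable setT (fun w => (L * clip s (X i w))%:E).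
  apply: (@bounded_integrable _ _ _ _ _ (`|L| * s)) => [|w].
    exact: measurableT_comp mLclip (mX i).
  exact: norm_scaled_clip_le.
apply/matrixP => i j; rewrite !mxE.
under eq_integral do rewrite EFinD.
by rewrite integralD // !int0 adde0.
Qed.

End clip_kernel.

Section spectral_norm.
Context (R : realType) (n : nat).
Implicit Types (M : 'M[R]_n) (v : 'cV[R]_n).

Lemma l2norm_ge0 v : 0 <= l2norm v.
Proof. exact: sqrtr_ge0. Qed.

Lemma l2norm_sqr v : l2norm v ^+ 2 = \sum_i v i ord0 ^+ 2.
Proof. by rewrite sqr_sqrtr // sumr_ge0 // => i _; exact: sqr_ge0. Qed.

Lemma norm_coord_le_l2norm v j : `|v j ord0| <= l2norm v.
Proof.
rewrite -sqrtr_sqr ler_sqrt ?sumr_ge0 // => [|i _]; last exact: sqr_ge0.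
by rewrite (bigD1 j) //= lerDl sumr_ge0 // => i _; exact: sqr_ge0.
Qed.

Lemma l2norm_mulmx_le M v :
  l2norm (M *m v) <= l2norm v * Num.sqrt (\sum_i (\sum_j `|M i j|) ^+ 2).
Proof.
have coord i : `|(M *m v) i ord0| <= l2norm v * \sum_j `|M i j|.
  rewrite mxE mulr_sumr; apply: le_trans (ler_norm_sum _ _ _) _.
  by apply: ler_sum => j _; rewrite normrM mulrC ler_wpM2r ?norm_coord_le_l2norm.
apply: (@le_trans _ _ (Num.sqrt (\sum_i (l2norm v * \sum_j `|M i j|) ^+ 2))).
  rewrite ler_sqrt ?sumr_ge0 // => [|i _]; last exact: sqr_ge0.
  apply: ler_sum => i _; rewrite -real_normK ?num_real //.
  by rewrite lerXn2r ?nnegrE ?coord // mulr_ge0 ?l2norm_ge0 ?sumr_ge0.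
under eq_bigr do rewrite exprMn.
by rewrite -mulr_sumr sqrtrM ?sqr_ge0 // sqrtr_sqr ger0_norm ?l2norm_ge0.
Qed.

Lemma l2norm_mulmx_le_specnorm M v : l2norm v <= 1 -> l2norm (M *m v) <= specnorm M.
Proof.
move=> v_le1; apply: ub_le_sup; last by exists v.
exists (Num.sqrt (\sum_i (\sum_j `|M i j|) ^+ 2)) => _ [u u_le1 <-].
apply: le_trans (l2norm_mulmx_le M u) _.
by rewrite ler_piMl ?sqrtr_ge0.
Qed.

Lemma specnorm_ge0 M : 0 <= specnorm M.
Proof.
apply: le_trans (l2norm_ge0 (M *m 0)) (l2norm_mulmx_le_specnorm M _).
by rewrite /l2norm big1 ?sqrtr0 // => i _; rewrite mxE expr0n.
Qed.

Lemma rowsums_le_specnorm M : (0 < n)%N ->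
  \sum_i (\sum_j M i j) ^+ 2 / n%:R <= specnorm M ^+ 2.
Proof.
move=> n_gt0; have n_pos : 0 < n%:R :> R by rewrite ltr0n.
pose u : 'cV[R]_n := const_mx (Num.sqrt n%:R)^-1.
have u_sqr : (Num.sqrt n%:R)^-1 ^+ 2 = n%:R^-1 :> R by rewrite exprVn sqr_sqrtr ?ltW.
have u_le1 : l2norm u <= 1.
  rewrite /l2norm; under eq_bigr do rewrite mxE u_sqr.
  by rewrite sumr_const card_ord -[_ *+ n]mulr_natr mulVf ?sqrtr1 // gt_eqF.
have Mu_sqr : l2norm (M *m u) ^+ 2 = \sum_i (\sum_j M i j) ^+ 2 / n%:R.
  rewrite l2norm_sqr; apply: eq_bigr => i _.
  rewrite mxE -u_sqr -exprMn mulr_suml; congr (_ ^+ 2).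
  by apply: eq_bigr => j _; rewrite mxE.
have Mu_le := l2norm_mulmx_le_specnorm M u_le1.
by rewrite -Mu_sqr lerXn2r ?nnegrE ?l2norm_ge0 // (le_trans (l2norm_ge0 _) Mu_le).
Qed.

Lemma specnorm_sum_outer_ge M (a : 'I_n -> R) : (0 < n)%N ->
  (forall i j, M i j = a i + a j) -> n%:R * \sum_i a i ^+ 2 <= specnorm M ^+ 2.
Proof.
move=> n_gt0 Ma; apply: le_trans (rowsums_le_specnorm M n_gt0).
have n_pos : 0 < n%:R :> R by rewrite ltr0n.
set s := \sum_i a i.
have rowsum i : \sum_j M i j = n%:R * a i + s.
  under eq_bigr do rewrite Ma.
  by rewrite big_split /= sumr_const card_ord mulr_natl.
have expand : \sum_i (n%:R * a i + s) ^+ 2 =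
    n%:R ^+ 2 * \sum_i a i ^+ 2 + 3 * n%:R * s ^+ 2 :> R.
  rewrite (eq_bigr (fun i => n%:R ^+ 2 * a i ^+ 2 + (2 * n%:R * s) * a i + s ^+ 2));
    last by move=> i _; ring.
  rewrite !big_split /= -!mulr_sumr sumr_const card_ord -/s -mulr_natr; ring.
rewrite [in X in _ <= X](eq_bigr (fun i => (n%:R * a i + s) ^+ 2 / n%:R));
  last by move=> i _; rewrite rowsum.
rewrite -mulr_suml expand ler_pdivlMr //.
have : 0 <= n%:R * s ^+ 2 by rewrite mulr_ge0 ?sqr_ge0 ?ltW.
lra.
Qed.

End spectral_norm.

Definition ntrue n (e : {ffun 'I_n -> bool}) : nat := \sum_i (e i : nat).

Lemma sum_exp_ntrue (R : comPzSemiRingType) (x : R) n :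
  \sum_(e : {ffun 'I_n -> bool}) x ^+ ntrue e = (1 + x) ^+ n.
Proof.
under eq_bigr do rewrite -prodrXr.
rewrite -(bigA_distr_bigA (fun _ (b : bool) => x ^+ b)) /=.
by under eq_bigr do rewrite big_bool /= expr0 expr1; rewrite prodr_const card_ord addrC.
Qed.

Lemma binomial_lower_tail (R : realType) n :
  \sum_(e : {ffun 'I_n -> bool} | (64 * ntrue e <= n)%N) (2^-1 : R) ^+ n
    <= expR (- (n%:R / 8)).
Proof.
(* Chernoff: weight each pattern by q^(64 ntrue e - n) >= 1 on the event, with
   q = 3/5; the total weight is ((1 + q^64) / (2 q))^n <= (7/8)^n. *)
pose q : R := 3 / 5.
have q_gt0 : 0 < q by rewrite /q; lra.
have q_le1 : q <= 1 by rewrite /q; lra.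
have qn_gt0 : 0 < q ^+ n := exprn_gt0 n q_gt0.
pose f (e : {ffun 'I_n -> bool}) :=
  (2^-1 : R) ^+ n * ((q ^+ n)^-1 * (q ^+ 64) ^+ ntrue e).
have f_ge0 e : 0 <= f e.
  by rewrite !mulr_ge0 ?invr_ge0 ?exprn_ge0 ?ltW //; lra.
apply: (@le_trans _ _ (\sum_e f e)).
  apply: le_trans (_ : _ <= \sum_(e | (64 * ntrue e <= n)%N) f e) _.
    apply: ler_sum => e e_small; rewrite ler_peMr ?exprn_ge0 //.
    by rewrite ler_pdivlMl // mulr1 -exprM ler_wiXn2l // ltW.
  by rewrite [X in _ <= X](bigID (fun e => 64 * ntrue e <= n)%N) /= lerDl sumr_ge0.
rewrite -mulr_sumr -mulr_sumr sum_exp_ntrue -exprVn -!exprMn.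
have -> : expR (- (n%:R / 8)) = expR (- 8^-1 : R) ^+ n.
  by rewrite -expRM_natl; congr expR; field.
have base_ge0 : 0 <= 2^-1 * (q^-1 * (1 + q ^+ 64)) :> R.
  by rewrite !mulr_ge0 ?invr_ge0 ?addr_ge0 ?exprn_ge0 ?ltW //; lra.
rewrite lerXn2r ?nnegrE ?expR_ge0 //.
have q64_le : q ^+ 64 <= q ^+ 6 by rewrite ler_wiXn2l // ltW.
have q6 : q ^+ 6 = 729 / 15625 by rewrite /q; field.
have qV : q^-1 = 5 / 3 by rewrite /q; field.
have := expR_ge1Dx (- 8^-1 : R); rewrite qV; lra.
Qed.

Lemma ntrue_clip_sqr_le (R : realType) n (s : R) (x : 'I_n -> R) : 0 <= s ->
  (ntrue [ffun i => s < `|x i|])%:R * s ^+ 2 <= \sum_i clip s (x i) ^+ 2.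
Proof.
move=> s_ge0; rewrite natr_sum mulr_suml; apply: ler_sum => i _; rewrite ffunE.
case: ltrP => [s_lt|_] /=; last by rewrite mul0r sqr_ge0.
by rewrite mul1r clip_sqr.
Qed.

Lemma specnorm_clip_kernel_gt (R : realType) n (L s : R) (x : 'I_n -> R) :
  0 < L -> 0 < s -> (n < 64 * ntrue [ffun i => (s < `|x i|)%R])%N ->
  L * s * n%:R / 8 < specnorm (\matrix_(i, j) clip_kernel L s (x i) (x j)).
Proof.
set k := ntrue _ => L_gt0 s_gt0 many.
have k_le : (k <= n)%N.
  by rewrite -[leqRHS]card_ord -sum1_card leq_sum // => i _; exact: leq_b1.
have n_gt0 : (0 < n)%N by lia.
have n_pos : 0 < n%:R :> R by rewrite ltr0n.
have many_R : n%:R < 64 * k%:R :> R by rewrite -natrM ltr_nat.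
set M := \matrix_(i, j) _.
have outer : n%:R * (L ^+ 2 * \sum_i clip s (x i) ^+ 2) <= specnorm M ^+ 2.
  rewrite mulr_sumr; under eq_bigr do rewrite -exprMn.
  by apply: specnorm_sum_outer_ge => // i j; rewrite mxE.
have clip_sum := ntrue_clip_sqr_le x (ltW s_gt0); rewrite -/k in clip_sum.
rewrite -(ltr_pXn2r (n := 2)) ?nnegrE ?specnorm_ge0 //; last first.
  by rewrite !mulr_ge0 ?ltW //; lra.
apply: lt_le_trans outer.
apply: (@lt_le_trans _ _ (n%:R * (L ^+ 2 * (k%:R * s ^+ 2)))); last first.
  by rewrite ler_pM2l // ler_pM2l ?exprn_gt0.
have Ls_pos : 0 < n%:R * L ^+ 2 * s ^+ 2 by rewrite !mulr_gt0 ?exprn_gt0.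
have -> : (L * s * n%:R / 8) ^+ 2 = n%:R * L ^+ 2 * s ^+ 2 * (n%:R / 64) by field.
have -> : n%:R * (L ^+ 2 * (k%:R * s ^+ 2)) = n%:R * L ^+ 2 * s ^+ 2 * k%:R by ring.
by rewrite ltr_pM2l //; lra.
Qed.

Lemma preimage_fibers (A B : Type) (f : A -> B) (D : set B) :
  f @^-1` D = \bigcup_(e in D) f @^-1` [set e].
Proof. by apply/seteqP; split => [w Dw|w [e De /= ->]] //; exists (f w). Qed.

Lemma measure_preimage_finType (R : realType) d (T : measurableType d)
    (mu : {measure set T -> \bar R}) (F : finType) (f : T -> F) (S : pred F) :
  (forall e, measurable (f @^-1` [set e])) ->
  mu (f @^-1` [set e | S e]) = (\sum_(e | S e) mu (f @^-1` [set e]))%E.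
Proof.
move=> mf; rewrite preimage_fibers measure_fin_bigcup //; last 2 first.
- exact: finite_finset.
- by move=> e1 e2 _ _ [w [w1 w2]]; rewrite -w1 -w2.
rewrite (fsbigE [seq e <- index_enum F | S e]) ?filter_uniq ?index_enum_uniq //.
- rewrite big_filter_cond; apply: eq_bigl => e.
  by case: (boolP (S e)) => //= Se; apply/idP; rewrite in_setE.
- by move=> e /=; rewrite mem_filter => /andP[Se _].
- by move=> e Se; rewrite mem_filter mem_index_enum andbT Se.
Qed.

Section bernoulli_pattern.
Context (R : realType) d (T : measurableType d) (P : probability T R).
Context (n : nat) (X : 'I_n -> T -> R) (p : R -> bool).
Hypotheses (mX : forall i, measurable_fun setT (X i)) (mp : measurable_fun setT p).
Hypothesis indepX : mutually_independent P X.
Hypothesis halfX : forall i, P [set w | p (X i w)] = (2^-1)%:E.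

Definition pattern (w : T) : {ffun 'I_n -> bool} := [ffun i => p (X i w)].

Let measurable_p b : measurable (p @^-1` [set b]).
Proof. by rewrite -[X in measurable X]setTI; exact: mp. Qed.

Let measurable_Xp i b : measurable (X i @^-1` (p @^-1` [set b])).
Proof. by rewrite -[X in measurable X]setTI; exact: mX. Qed.

Lemma pattern_fiber e :
  pattern @^-1` [set e] = \bigcap_(i in [set: 'I_n]) X i @^-1` (p @^-1` [set e i]).
Proof.
apply/seteqP; split => [w /= <- i _|w /= pw]; first by rewrite ffunE.
by apply/ffunP => i; rewrite ffunE; exact: pw.
Qed.

Lemma measurable_pattern_fiber e : measurable (pattern @^-1` [set e]).
Proof.
rewrite pattern_fiber; apply: fin_bigcap_measurable; first exact: finite_finset.
by move=> i _; exact: measurable_Xp.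
Qed.

Lemma measurable_pattern_in (S : pred {ffun 'I_n -> bool}) :
  measurable (pattern @^-1` [set e | S e]).
Proof.
rewrite preimage_fibers; apply: fin_bigcup_measurable; first exact: finite_finset.
by move=> e _; exact: measurable_pattern_fiber.
Qed.

Lemma prob_pattern e : P (pattern @^-1` [set e]) = ((2^-1 : R) ^+ n)%:E.
Proof.
have half i b : P (X i @^-1` (p @^-1` [set b])) = (2^-1)%:E.
  case: b; first exact: halfX.
  have -> : X i @^-1` (p @^-1` [set false]) = ~` (X i @^-1` (p @^-1` [set true])).
    by apply/seteqP; split => w /=; case: (p (X i w)).
  by rewrite probability_setC // halfX -EFinB; congr EFin; lra.
rewrite pattern_fiber indepX // (eq_bigr (fun=> (2^-1)%:E)) => [|i _]; last exact: half.
by rewrite prodEFin prodr_const card_ord.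
Qed.

Lemma prob_pattern_in (S : pred {ffun 'I_n -> bool}) :
  P (pattern @^-1` [set e | S e]) = (\sum_(e | S e) (2^-1 : R) ^+ n)%:E.
Proof.
rewrite measure_preimage_finType; last exact: measurable_pattern_fiber.
by rewrite -sumEFin; apply: eq_bigr => e _; exact: prob_pattern.
Qed.

End bernoulli_pattern.

Unset Implicit Arguments.

Theorem proposition1 (R : realType) (L sigma : R) (n : nat)
  (d : measure_display) (T : measurableType d) (P : probability T R)
  (X : 'I_n -> T -> R) :
  0 < L -> 0 < sigma ->
  (forall i, measurable_fun setT (X i)) ->
  mutually_independent P X ->
  identically_distributed P X ->
  (forall i, symmetric_distribution P (X i)) ->
  (forall i, P [set w | sigma < `|X i w|] = (2^-1)%:E) ->
  exists K : R -> R -> R,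
    (forall x y, K x y = K y x) /\
    (forall x1 x2 y1 y2,
       `|K x1 x2 - K y1 y2| <= L * (`|x1 - y1| + `|x2 - y2|)) /\
    ((8 <= n)%N ->
       (forall i j, P.-integrable setT (fun w => (K (X i w) (X j w))%:E)) /\
       exists A : set T, measurable A /\
         A `<=` [set w | L * sigma * n%:R / 8 <
            specnorm (kernel_matrix X K w - expected_kernel_matrix P X K)] /\
         ((1 - expR (- (n%:R / 8)))%:E <= P A)%E).
Proof.
move=> L_gt0 sigma_gt0 mX indepX _ symX halfX.
exists (clip_kernel L sigma); split; first by move=> x y; rewrite /clip_kernel addrC.
split=> [x1 x2 y1 y2|_]; first exact/clip_kernel_lipschitz/ltW.
split=> [i j|]; first exact: clip_kernel_integrable (ltW sigma_gt0) (mX i) (mX j).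
pose exceed (x : R) := sigma < `|x|.
have mexceed : measurable_fun setT exceed by apply: measurable_fun_ltr.
pose few := pattern X exceed @^-1` [set e | (64 * ntrue e <= n)%N].
exists (~` few); split; first exact/measurableC/measurable_pattern_in.
split=> [w /= /negP many|].
  rewrite expected_clip_kernel_matrix ?subr0 //; last exact: ltW.
  by apply: specnorm_clip_kernel_gt; rewrite // ltnNge.
rewrite /few probability_setC; last exact: measurable_pattern_in.
rewrite (prob_pattern_in mX mexceed indepX halfX (fun e => 64 * ntrue e <= n)%N).
by rewrite -EFinB lee_fin lerD2l lerN2 binomial_lower_tail.
Qed.
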